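(* Let $\boldsymbol{m}=(m_1,m_2)\in\mathbb{N}^2$ and $g=\gcd(m_1,m_2)$. Then \[\mathrm{LS}^{(\boldsymbol{m})}=\bigcup_{\rho=0}^{2g-1}\Big\{\boldsymbol{\varrho}^{(\boldsymbol{m})}_{\rho/m_2}\big(t_l\big)\ :\ l\in\{0,\dots,4m_1m_2/g-1\}\Big\},\qquad t_l=\frac{l\pi}{2m_1m_2}.\]
   Context: Rhodonea curve: $\boldsymbol{\varrho}^{(\boldsymbol{m})}_\alpha(t)=\big(\cos(m_2t)\cos(m_1t-\alpha\pi),\ \cos(m_2t)\sin(m_1t-\alpha\pi)\big)$, $t\in\mathbb{R}$, $\alpha\in\mathbb{R}$. Nodal index set: $\mathrm{I}^{(\boldsymbol{m})}=\{(i_1,i_2)\in\mathbb{Z}^2:\ 0\le i_1\le m_1,\ -2m_2<i_2\le 2m_2,\ i_2\le0\text{ if }i_1=m_1,\ i_1+i_2\text{ even}\}$. For $\boldsymbol{i}\in\mathrm{I}^{(\boldsymbol{m})}$ put $r_{i_1}=\cos\!\big(\frac{i_1\pi}{2m_1}\big)$, $\theta_{i_2}=\frac{i_2\pi}{2m_2}$ and $\boldsymbol{x}_{\boldsymbol{i}}=(r_{i_1}\cos\theta_{i_2},\ r_{i_1}\sin\theta_{i_2})$. The rhodonea nodes are $\mathrm{LS}^{(\boldsymbol{m})}=\{\boldsymbol{x}_{\boldsymbol{i}}:\boldsymbol{i}\in\mathrm{I}^{(\boldsymbol{m})}\}$. *)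

From Stdlib Require Import Reals ZArith Arith.
Open Scope R_scope.

Definition rhodonea (m1 m2 : nat) (alpha t : R) : R * R :=
  (cos (INR m2 * t) * cos (INR m1 * t - alpha * PI),
   cos (INR m2 * t) * sin (INR m1 * t - alpha * PI)).

Definition in_index_set (m1 m2 : nat) (i1 i2 : Z) : Prop :=
  (0 <= i1 <= Z.of_nat m1)%Z /\
  (- 2 * Z.of_nat m2 < i2 <= 2 * Z.of_nat m2)%Z /\
  (i1 = Z.of_nat m1 -> (i2 <= 0)%Z) /\
  Z.Even (i1 + i2).

Definition node (m1 m2 : nat) (i1 i2 : Z) : R * R :=
  let r := cos (IZR i1 * PI / (2 * INR m1)) in
  let th := IZR i2 * PI / (2 * INR m2) in
  (r * cos th, r * sin th).

Definition in_LS (m1 m2 : nat) (p : R * R) : Prop :=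
  exists i1 i2 : Z, in_index_set m1 m2 i1 i2 /\ p = node m1 m2 i1 i2.

Definition t_l (m1 m2 l : nat) : R := INR l * PI / (2 * INR m1 * INR m2).

(* Substituting [t_l] shows that the point of the rhodonea curve with phase
   [rho / m2] at time [t_l] is the node with (unrestricted) integer indices
   [(l, l - 2 rho)].  Nodes only depend on their indices modulo the symmetries
   [i1 -> -i1], [i1 -> i1 + 4 m1], [i2 -> i2 + 4 m2], [(i1, i2) -> (2 m1 - i1, i2 + 2 m2)],
   and [i2] is irrelevant when [i1 = m1]; these reduce any index pair of even sum
   into the index set.  Conversely, an index pair of even sum is congruent to some
   [(l, l - 2 rho)] with [rho < 2 g], by Bezout, and [l] only matters modulo
   [4 lcm(m1, m2) = 4 m1 m2 / g]. *)
From Stdlib Require Import Reals ZArith Arith Lia.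
Open Scope R_scope.

Lemma cos_period_Z (x : R) (k : Z) : cos (x + 2 * IZR k * PI) = cos x.
Proof.
  destruct (Z_le_gt_dec 0 k) as [k_ge0 | k_lt0].
  - rewrite <- (Z2Nat.id k k_ge0), <- INR_IZR_INZ. apply cos_period.
  - rewrite <- (cos_period (x + 2 * IZR k * PI) (Z.to_nat (- k))).
    rewrite INR_IZR_INZ, Z2Nat.id by lia. rewrite opp_IZR. f_equal; ring.
Qed.

Lemma sin_period_Z (x : R) (k : Z) : sin (x + 2 * IZR k * PI) = sin x.
Proof.
  destruct (Z_le_gt_dec 0 k) as [k_ge0 | k_lt0].
  - rewrite <- (Z2Nat.id k k_ge0), <- INR_IZR_INZ. apply sin_period.
  - rewrite <- (sin_period (x + 2 * IZR k * PI) (Z.to_nat (- k))).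
    rewrite INR_IZR_INZ, Z2Nat.id by lia. rewrite opp_IZR. f_equal; ring.
Qed.

Lemma Z_Even_shift (x y k : Z) : Z.Even x -> y = (x + 2 * k)%Z -> Z.Even y.
Proof. intros [e ->] ->. exists (e + k)%Z. ring. Qed.

Lemma diagonal_representative (M1 M2 G L a b : Z) :
  (0 < G)%Z -> (0 < L)%Z -> Z.Bezout M1 M2 G -> (M1 | L)%Z -> (M2 | L)%Z ->
  Z.Even (a + b) ->
  exists rho l k1 k2 : Z,
    (0 <= rho < 2 * G)%Z /\ (0 <= l < 4 * L)%Z /\
    l = (a + 4 * M1 * k1)%Z /\ (l - 2 * rho = b + 4 * M2 * k2)%Z.
Proof.
  intros G_pos L_pos [u [v bezout]] [c1 L_M1] [c2 L_M2] [e ab_even].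
  set (d := (a - e)%Z).
  pose proof (Z.div_mod d (2 * G) ltac:(lia)) as d_div.
  pose proof (Z.mod_pos_bound d (2 * G) ltac:(lia)) as rho_bound.
  set (q := (d / (2 * G))%Z) in *. set (rho := (d mod (2 * G))%Z) in *.
  (* [a - 4 M1 u q] already lies on the diagonal of [rho]; then reduce mod [4 L]. *)
  set (l0 := (a - 4 * M1 * u * q)%Z).
  pose proof (Z.div_mod l0 (4 * L) ltac:(lia)) as l0_div.
  pose proof (Z.mod_pos_bound l0 (4 * L) ltac:(lia)) as l_bound.
  set (s := (l0 / (4 * L))%Z) in *. set (l := (l0 mod (4 * L))%Z) in *.
  exists rho, l, (- u * q - c1 * s)%Z, (v * q - c2 * s)%Z.
  split; [lia | split; [lia | split]].
  - assert (L * s = c1 * M1 * s)%Z by (rewrite L_M1; ring). lia.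
  - assert (L * s = c2 * M2 * s)%Z by (rewrite L_M2; ring).
    assert (G * q = u * M1 * q + v * M2 * q)%Z by (rewrite <- bezout; ring).
    lia.
Qed.

Lemma Z_bezout_of_nat_gcd (m1 m2 : nat) : (0 < m1)%nat ->
  Z.Bezout (Z.of_nat m1) (Z.of_nat m2) (Z.of_nat (Nat.gcd m1 m2)).
Proof.
  intros m1_pos. destruct (Nat.gcd_bezout_pos m1 m2 m1_pos) as [u [v bezout]].
  exists (Z.of_nat u), (- Z.of_nat v)%Z. lia.
Qed.

Lemma Z_divide_of_nat (n m : nat) : Nat.divide n m -> (Z.of_nat n | Z.of_nat m)%Z.
Proof. intros [c ->]. exists (Z.of_nat c). lia. Qed.

Lemma mul_div_gcd_eq_lcm (m1 m2 : nat) :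
  (4 * m1 * m2 / Nat.gcd m1 m2 = 4 * Nat.lcm m1 m2)%nat.
Proof.
  unfold Nat.lcm. rewrite Nat.Lcm0.divide_div_mul_exact by apply Nat.gcd_divide_r.
  ring.
Qed.

Section Nodes.

Variables m1 m2 : nat.
Hypothesis m1_pos : (0 < m1)%nat.
Hypothesis m2_pos : (0 < m2)%nat.

Local Notation M1 := (Z.of_nat m1).
Local Notation M2 := (Z.of_nat m2).
Local Notation node := (node m1 m2).
Local Notation in_LS := (in_LS m1 m2).

Let m1_neq0 : INR m1 <> 0. Proof. apply not_0_INR; lia. Qed.
Let m2_neq0 : INR m2 <> 0. Proof. apply not_0_INR; lia. Qed.

Lemma rhodonea_t_l (rho l : nat) :
  rhodonea m1 m2 (INR rho / INR m2) (t_l m1 m2 l) =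
  node (Z.of_nat l) (Z.of_nat l - 2 * Z.of_nat rho).
Proof.
  unfold rhodonea, node, t_l.
  rewrite minus_IZR, mult_IZR, <- !INR_IZR_INZ.
  replace (INR m2 * (INR l * PI / (2 * INR m1 * INR m2)))
    with (INR l * PI / (2 * INR m1)) by (field; auto).
  replace (INR m1 * (INR l * PI / (2 * INR m1 * INR m2)) - INR rho / INR m2 * PI)
    with ((INR l - 2 * INR rho) * PI / (2 * INR m2)) by (field; auto).
  reflexivity.
Qed.

Lemma node_periodic (a b a' b' k1 k2 : Z) :
  a' = (a + 4 * M1 * k1)%Z -> b' = (b + 4 * M2 * k2)%Z ->
  node a' b' = node a b.
Proof.
  intros -> ->. unfold node. rewrite !plus_IZR, !mult_IZR, <- !INR_IZR_INZ.
  replace ((IZR a + 4 * INR m1 * IZR k1) * PI / (2 * INR m1))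
    with (IZR a * PI / (2 * INR m1) + 2 * IZR k1 * PI) by (field; auto).
  replace ((IZR b + 4 * INR m2 * IZR k2) * PI / (2 * INR m2))
    with (IZR b * PI / (2 * INR m2) + 2 * IZR k2 * PI) by (field; auto).
  rewrite !cos_period_Z, sin_period_Z. reflexivity.
Qed.

Lemma node_opp_l (a b : Z) : node (- a) b = node a b.
Proof.
  unfold node. rewrite opp_IZR.
  replace (- IZR a * PI / (2 * INR m1)) with (- (IZR a * PI / (2 * INR m1)))
    by (field; auto).
  rewrite cos_neg. reflexivity.
Qed.

(* A negative radius [r] with angle [th] is the positive radius [-r] with [th + PI]. *)
Lemma node_reflect (a b : Z) :
  node (2 * M1 - a) (b + 2 * M2) = node a b.
Proof.
  unfold node. rewrite minus_IZR, plus_IZR, !mult_IZR, <- !INR_IZR_INZ.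
  replace ((2 * INR m1 - IZR a) * PI / (2 * INR m1))
    with (PI - IZR a * PI / (2 * INR m1)) by (field; auto).
  replace ((IZR b + 2 * INR m2) * PI / (2 * INR m2))
    with (IZR b * PI / (2 * INR m2) + PI) by (field; auto).
  rewrite Rtrigo_facts.cos_pi_minus, neg_cos, neg_sin. f_equal; ring.
Qed.

Lemma node_pole (b b' : Z) : node M1 b = node M1 b'.
Proof.
  unfold node. rewrite <- INR_IZR_INZ.
  replace (INR m1 * PI / (2 * INR m1)) with (PI / 2) by (field; auto).
  rewrite cos_PI2. f_equal; ring.
Qed.

Lemma in_LS_node_bounded (a b : Z) :
  (0 <= a <= M1)%Z -> (- 2 * M2 < b <= 2 * M2)%Z -> Z.Even (a + b) ->
  in_LS (node a b).
Proof.
  intros a_bound b_bound ab_even.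
  destruct (Z.eq_dec a M1) as [-> | a_neq]; [destruct (Z_le_gt_dec b 0) |].
  - exists M1, b. repeat split; auto; lia.
  - exists M1, (b - 2 * M2)%Z. split; [| apply node_pole].
    repeat split; try lia. apply (Z_Even_shift _ _ (- M2) ab_even). lia.
  - exists a, b. repeat split; auto; lia.
Qed.

Lemma in_LS_node_half (a b : Z) :
  (0 <= a <= M1)%Z -> Z.Even (a + b) -> in_LS (node a b).
Proof.
  intros a_bound ab_even.
  pose proof (Z.div_mod b (4 * M2) ltac:(lia)) as b_div.
  pose proof (Z.mod_pos_bound b (4 * M2) ltac:(lia)) as r_bound.
  set (q := (b / (4 * M2))%Z) in *. set (r := (b mod (4 * M2))%Z) in *.
  destruct (Z_le_gt_dec r (2 * M2)).
  - rewrite (node_periodic a r a b 0 q) by lia.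
    apply in_LS_node_bounded; try lia.
    apply (Z_Even_shift _ _ (- 2 * M2 * q) ab_even). lia.
  - rewrite (node_periodic a (r - 4 * M2) a b 0 (q + 1)) by lia.
    apply in_LS_node_bounded; try lia.
    apply (Z_Even_shift _ _ (- 2 * M2 * (q + 1)) ab_even). lia.
Qed.

Lemma in_LS_node_period (a b : Z) :
  (0 <= a <= 2 * M1)%Z -> Z.Even (a + b) -> in_LS (node a b).
Proof.
  intros a_bound ab_even. destruct (Z_le_gt_dec a M1).
  - apply in_LS_node_half; [lia | exact ab_even].
  - rewrite <- node_reflect. apply in_LS_node_half; [lia |].
    apply (Z_Even_shift _ _ (M1 + M2 - a) ab_even). lia.
Qed.

Lemma in_LS_node (a b : Z) : Z.Even (a + b) -> in_LS (node a b).
Proof.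
  intros ab_even.
  pose proof (Z.div_mod a (4 * M1) ltac:(lia)) as a_div.
  pose proof (Z.mod_pos_bound a (4 * M1) ltac:(lia)) as r_bound.
  set (q := (a / (4 * M1))%Z) in *. set (r := (a mod (4 * M1))%Z) in *.
  destruct (Z_le_gt_dec r (2 * M1)).
  - rewrite (node_periodic r b a b q 0) by lia.
    apply in_LS_node_period; [lia |].
    apply (Z_Even_shift _ _ (- 2 * M1 * q) ab_even). lia.
  - rewrite (node_periodic (- (4 * M1 - r)) b a b (q + 1) 0), node_opp_l by lia.
    apply in_LS_node_period; [lia |].
    apply (Z_Even_shift _ _ (2 * M1 - r - 2 * M1 * q) ab_even). lia.
Qed.

End Nodes.

Theorem theorem3p1 (m1 m2 : nat) (hm1 : (0 < m1)%nat) (hm2 : (0 < m2)%nat) :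
  let g := Nat.gcd m1 m2 in
  forall p : R * R,
    in_LS m1 m2 p <->
    exists rho l : nat,
      (rho < 2 * g)%nat /\ (l < 4 * m1 * m2 / g)%nat /\
      p = rhodonea m1 m2 (INR rho / INR m2) (t_l m1 m2 l).
Proof.
  intros g p. split.
  - intros (i1 & i2 & (_ & _ & _ & i_even) & ->).
    assert (g_pos : (0 < g)%nat)
      by (destruct (Nat.eq_dec g 0) as [g0 | ]; [apply Nat.gcd_eq_0_l in g0 |]; lia).
    assert (lcm_pos : (0 < Nat.lcm m1 m2)%nat)
      by (destruct (Nat.eq_dec (Nat.lcm m1 m2) 0) as [l0 | ];
          [apply Nat.lcm_eq_0 in l0 |]; lia).
    destruct (diagonal_representative (Z.of_nat m1) (Z.of_nat m2) (Z.of_nat g)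
                (Z.of_nat (Nat.lcm m1 m2)) i1 i2)
      as (rho & l & k1 & k2 & rho_bound & l_bound & l_eq & diag_eq);
      [lia | lia | now apply Z_bezout_of_nat_gcd
      | apply Z_divide_of_nat, Nat.divide_lcm_l
      | apply Z_divide_of_nat, Nat.divide_lcm_r | exact i_even |].
    exists (Z.to_nat rho), (Z.to_nat l).
    rewrite mul_div_gcd_eq_lcm. split; [lia | split; [lia |]].
    rewrite rhodonea_t_l, !Z2Nat.id by lia.
    symmetry; now apply (node_periodic m1 m2 hm1 hm2 _ _ _ _ k1 k2).
  - intros (rho & l & _ & _ & ->).
    rewrite rhodonea_t_l by assumption. apply in_LS_node; [assumption.. |].
    exists (Z.of_nat l - Z.of_nat rho)%Z. ring.
Qed.
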